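(* Let $\Gamma$ be a marginal vector with strictly positive entries and fix an edge $ij\in\mathcal E$. The Bregman projections (with respect to $\Phi$) of $\Gamma$ onto the four affine sets below are given as follows, where in each case all components of $\Gamma$ not mentioned are unchanged. (a) If $\Gamma'=\mathcal P_{\mathcal X_{ij\to i}}(\Gamma)$, then for all $x_i,x_j\in\chi$: $\Gamma'_{ij}(x_i,x_j)=\Gamma_{ij}(x_i,x_j)\sqrt{\Gamma_i(x_i)/\sum_x\Gamma_{ij}(x_i,x)}$ and $\Gamma'_i(x_i)=\Gamma_i(x_i)\sqrt{\sum_x\Gamma_{ij}(x_i,x)/\Gamma_i(x_i)}$. (b) If $\Gamma'=\mathcal P_{\mathcal X_{ij,i}}(\Gamma)$, then $\Gamma'_i=\Gamma_i/\sum_x\Gamma_i(x)$ and $\Gamma'_{ij}=\Gamma_{ij}/\sum_{x_i,x_j}\Gamma_{ij}(x_i,x_j)$. (c) If $\Gamma'=\mathcal P_{\mathcal X_{ij\to j}}(\Gamma)$, then for all $x_i,x_j\in\chi$: $\Gamma'_{ij}(x_i,x_j)=\Gamma_{ij}(x_i,x_j)\sqrt{\Gamma_j(x_j)/\sum_x\Gamma_{ij}(x,x_j)}$ and $\Gamma'_j(x_j)=\Gamma_j(x_j)\sqrt{\sum_x\Gamma_{ij}(x,x_j)/\Gamma_j(x_j)}$. (d) If $\Gamma'=\mathcal P_{\mathcal X_{ij,j}}(\Gamma)$, then $\Gamma'_j=\Gamma_j/\sum_x\Gamma_j(x)$ and $\Gamma'_{ij}=\Gamma_{ij}/\sum_{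x_i,x_j}\Gamma_{ij}(x_i,x_j)$.
   Context: Let $G=(\mathcal V,\mathcal E)$ be a graph with $\mathcal V=\{1,\dots,n\}$, each edge written as an ordered pair $ij$, and $\chi=\{0,\dots,d-1\}$. A marginal vector $\Gamma$ consists of vectors $\Gamma_i\in\mathbb R^d$ ($i\in\mathcal V$, indexed $\Gamma_i(x)$) and matrices $\Gamma_{ij}\in\mathbb R^{d\times d}$ ($ij\in\mathcal E$, indexed $\Gamma_{ij}(x_i,x_j)$). Let $\Phi(\Gamma)=\sum\Gamma(\log\Gamma-1)$ summed over all entries, with Bregman divergence $\mathcal D_\Phi(P,Q)=\Phi(P)-\Phi(Q)-\langle\nabla\Phi(Q),P-Q\rangle$, and for a set $\mathcal X$ the Bregman projection $\mathcal P_{\mathcal X}(Q)=\arg\min_{P\in\mathcal X}\mathcal D_\Phi(P,Q)$. With $\mathbb 1$ the all-ones vector, define $\mathcal X_{ij\to i}=\{\Gamma:\Gamma_{ij}\mathbb 1=\Gamma_i\}$, $\mathcal X_{ij,i}=\{\Gamma:\Gamma_i^\top\mathbb 1=1,\ \mathbb 1^\top\Gamma_{ij}\mathbb 1=1\}$, $\mathcal X_{ij\to j}=\{\Gamma:\Gamma_{ij}^\top\mathbb 1=\Gamma_j\}$, $\mathcal X_{ij,j}=\{\Gamma:\Gamma_j^\top\mathbb 1=1,\ \mathbb 1^\top\Gamma_{ij}\mathbb 1=1\}$. *)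

From HB Require Import structures.
From mathcomp Require Import all_boot all_order all_algebra.
From mathcomp Require Import all_classical all_reals.
From mathcomp Require Import exp.
Set Implicit Arguments. Unset Strict Implicit. Unset Printing Implicit Defensive.
Import Order.TTheory GRing.Theory Num.Theory.
Local Open Scope ring_scope.

(* Graph: vertices 'I_n, edges indexed by 'I_m, edge e is the ordered pair
   (src e, dst e). Labels chi = 'I_d. *)

(* A marginal vector: node vectors Gamma_i (i : 'I_n) and edge matrices
   Gamma_e (e : 'I_m), indexed Gamma_e(x_i, x_j). *)
Record marg (R : realType) (n m d : nat) := Marg {
  mnode : 'I_n -> 'I_d -> R;
  medge : 'I_m -> 'I_d -> 'I_d -> R }.

Section Defs.
Variables (R : realType) (n m d : nat).
Local Notation M := (marg R n m d).

Definition sum_entries2 (f : R -> R -> R) (P Q : M) : R :=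
  \sum_(i < n) \sum_(x < d) f (mnode P i x) (mnode Q i x)
  + \sum_(e < m) \sum_(x < d) \sum_(y < d) f (medge P e x y) (medge Q e x y).

Definition Phi (P : M) : R := sum_entries2 (fun p _ => p * (ln p - 1)) P P.

(* <grad Phi(Q), P - Q>, grad Phi(Q) = log Q entrywise *)
Definition gradPhi_inner (Q P : M) : R :=
  sum_entries2 (fun p q => ln q * (p - q)) P Q.

Definition Bregman (P Q : M) : R := Phi P - Phi Q - gradPhi_inner Q P.

(* domain of Phi: nonnegative entries (with 0 log 0 = 0) *)
Definition nonneg_marg (P : M) : Prop :=
  (forall i x, 0 <= mnode P i x) /\ (forall e x y, 0 <= medge P e x y).

Definition pos_marg (P : M) : Prop :=
  (forall i x, 0 < mnode P i x) /\ (forall e x y, 0 < medge P e x y).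

Definition is_bregman_proj (X : M -> Prop) (Q P : M) : Prop :=
  nonneg_marg P /\ X P /\
  forall P', nonneg_marg P' -> X P' -> Bregman P Q <= Bregman P' Q.

Variables (src dst : 'I_m -> 'I_n).

Definition rowsum (G : M) e (xi : 'I_d) := \sum_(x < d) medge G e xi x.
Definition colsum (G : M) e (xj : 'I_d) := \sum_(x < d) medge G e x xj.
Definition nodesum (G : M) i := \sum_(x < d) mnode G i x.
Definition edgesum (G : M) e := \sum_(x < d) \sum_(y < d) medge G e x y.

Definition X_to_i e (G : M) : Prop := forall xi, rowsum G e xi = mnode G (src e) xi.
Definition X_norm_i e (G : M) : Prop := nodesum G (src e) = 1 /\ edgesum G e = 1.
Definition X_to_j e (G : M) : Prop := forall xj, colsum G e xj = mnode G (dst e) xj.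
Definition X_norm_j e (G : M) : Prop := nodesum G (dst e) = 1 /\ edgesum G e = 1.

End Defs.

(* Write [bregman1 p q = p ln (p / q) - p + q], so that [Bregman P Q] is the sum of
   [bregman1] over all entries: it is nonnegative and vanishes only at [P = Q].
   If [T = Q * exp g] entrywise, the three-point identity
   [D(P, Q) = D(T, Q) + D(P, T) + <P - T, ln T - ln Q>] has cross term
   [<g, P> - <g, T>].  So when [T] lies in an affine set [X] on which [<g, _>] is
   constant (i.e. [g] is a combination of the linear constraints defining [X]), the
   Pythagorean identity [D(P, Q) = D(T, Q) + D(P, T)] holds on [X], and [T] is the
   unique Bregman projection.  For [X_{ij->i}] take [g = lam(x_i)] on
   [Gamma_ij(x_i, _)] and [-lam(x_i)] on [Gamma_i(x_i)], where
   [exp lam = sqrt (Gamma_i / sum_x Gamma_ij(_, x))]; for [X_{ij,i}] take [g] equal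
   to minus the log of the total mass on each of [Gamma_i] and [Gamma_ij].  Case (c)
   is case (a) after transposing every edge matrix, and (d) is (b) at the node j. *)
From HB Require Import structures.
From mathcomp Require Import all_boot all_order all_algebra.
From mathcomp Require Import all_classical all_reals.
From mathcomp Require Import sequences exp.
From mathcomp Require Import ring lra.
Import Order.TTheory GRing.Theory Num.Theory.
Local Open Scope ring_scope.

Section BregmanEntropy.
Context {R : realType} {n m d : nat}.
Local Notation M := (marg R n m d).

Definition entry_index := ('I_n * 'I_d + 'I_m * 'I_d * 'I_d)%type.

Definition entry (P : M) (k : entry_index) : R :=
  match k with inl (i, x) => mnode P i x | inr (e, x, y) => medge P e x y end.

Lemma sum_entry_index (F : entry_index -> R) : \sum_k F k =
  \sum_(i < n) \sum_(x < d) F (inl (i, x))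
  + \sum_(e < m) \sum_(x < d) \sum_(y < d) F (inr (e, x, y)).
Proof.
rewrite big_sumType !pair_bigA; congr (_ + _); apply: eq_bigr => -[] //.
by case.
Qed.

Lemma sum_entries2E f (P Q : M) :
  sum_entries2 f P Q = \sum_k f (entry P k) (entry Q k).
Proof. by rewrite sum_entry_index. Qed.

Lemma marg_eqP (P Q : M) : P = Q <->
  (forall e x y, medge P e x y = medge Q e x y) /\
  (forall i x, mnode P i x = mnode Q i x).
Proof.
split=> [-> //|[eqE eqN]]; case: P Q eqE eqN => [Pn Pe] [Qn Qe] /= eqE eqN.
by congr Marg; do !(apply/funext => ?).
Qed.

Lemma entry_inj (P Q : M) : entry P =1 entry Q -> P = Q.
Proof.
move=> eqPQ; apply/marg_eqP; split=> [e x y|i x].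
- exact: eqPQ (inr (e, x, y)).
- exact: eqPQ (inl (i, x)).
Qed.

Lemma nonneg_margE (P : M) : nonneg_marg P <-> forall k, 0 <= entry P k.
Proof.
split=> [[Pn Pe] [[i x]|[[e x] y]]|P_ge0]; [exact: Pn|exact: Pe|split].
- by move=> i x; exact: P_ge0 (inl (i, x)).
- by move=> e x y; exact: P_ge0 (inr (e, x, y)).
Qed.

Lemma pos_marg_entry (P : M) : pos_marg P -> forall k, 0 < entry P k.
Proof. by case=> Pn Pe [[]|[[]]]. Qed.

Definition bregman1 (p q : R) := p * (ln p - 1) - q * (ln q - 1) - ln q * (p - q).

Lemma bregman10 q : bregman1 0 q = q.
Proof. by rewrite /bregman1 ln0 // !mul0r; ring. Qed.

Lemma bregman1_expR p q : 0 < p -> 0 < q ->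
  bregman1 p q = p * (expR (ln q - ln p) - 1 - (ln q - ln p)).
Proof.
move=> p_gt0 q_gt0; rewrite expRD expRN !lnK ?posrE // /bregman1.
by field; rewrite gt_eqF.
Qed.

Lemma bregman1_ge0 p q : 0 <= p -> 0 < q -> 0 <= bregman1 p q.
Proof.
rewrite le_eqVlt => /predU1P[<- q_gt0|p_gt0 q_gt0]; first by rewrite bregman10 ltW.
rewrite bregman1_expR //; apply: mulr_ge0; first exact: ltW.
have := expR_ge1Dx (ln q - ln p); lra.
Qed.

Lemma bregman1_eq0 p q : 0 <= p -> 0 < q -> bregman1 p q = 0 -> p = q.
Proof.
rewrite le_eqVlt => /predU1P[<- q_gt0|p_gt0 q_gt0]; first by rewrite bregman10; lra.
have [lnE|lnD] := eqVneq (ln q - ln p) 0.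
  by move=> _; apply: ln_inj; rewrite ?posrE //; lra.
rewrite bregman1_expR // => /eqP; rewrite mulf_eq0 gt_eqF //= => /eqP.
by have := expR_gt1Dx lnD; lra.
Qed.

Lemma BregmanE (P Q : M) : Bregman P Q = \sum_k bregman1 (entry P k) (entry Q k).
Proof. by rewrite /Bregman /Phi /gradPhi_inner !sum_entries2E -!sumrB. Qed.

Lemma Bregman_ge0 (P Q : M) : nonneg_marg P -> (forall k, 0 < entry Q k) ->
  0 <= Bregman P Q.
Proof.
move=> /nonneg_margE P_ge0 Q_gt0.
by rewrite BregmanE sumr_ge0 // => k _; apply: bregman1_ge0.
Qed.

Lemma Bregman_eq0 (P Q : M) : nonneg_marg P -> (forall k, 0 < entry Q k) ->
  Bregman P Q = 0 -> P = Q.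
Proof.
move=> /nonneg_margE P_ge0 Q_gt0; rewrite BregmanE => B0.
apply: entry_inj => k; apply: bregman1_eq0 => //.
by apply: (psumr_eq0P _ B0) => // {}k _; apply: bregman1_ge0.
Qed.

Lemma Bregman_three_point (P Q T : M) : Bregman P Q = Bregman T Q + Bregman P T
  + \sum_k (entry P k - entry T k) * (ln (entry T k) - ln (entry Q k)).
Proof.
by rewrite !BregmanE -!big_split; apply: eq_bigr => k _ /=; rewrite /bregman1; ring.
Qed.

Definition tilt (Q g : M) : M :=
  Marg (fun i x => mnode Q i x * expR (mnode g i x))
       (fun e x y => medge Q e x y * expR (medge g e x y)).

Definition inner (g P : M) : R := sum_entries2 *%R g P.

Lemma entry_tilt (Q g : M) k : entry (tilt Q g) k = entry Q k * expR (entry g k).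
Proof. by case: k => [[]|[[]]]. Qed.

Theorem bregman_proj_tilt {X : M -> Prop} {Q g : M} :
  pos_marg Q -> X (tilt Q g) ->
  (forall P, X P -> inner g P = inner g (tilt Q g)) ->
  forall P, is_bregman_proj X Q P <-> P = tilt Q g.
Proof.
move=> /pos_marg_entry Q_gt0 XT inner_const P; set T := tilt Q g.
have T_gt0 k : 0 < entry T k by rewrite entry_tilt mulr_gt0 ?expR_gt0.
have T_nneg : nonneg_marg T by apply/nonneg_margE => k; apply: ltW.
have pythagoras P' : X P' -> Bregman P' Q = Bregman T Q + Bregman P' T.
  move=> XP'; rewrite (Bregman_three_point _ _ T).
  have -> : \sum_k (entry P' k - entry T k) * (ln (entry T k) - ln (entry Q k))
            = inner g P' - inner g T.
    rewrite /inner !sum_entries2E -sumrB; apply: eq_bigr => k _.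
    by rewrite entry_tilt lnM ?posrE ?expR_gt0 // expRK; ring.
  by rewrite inner_const // subrr addr0.
split=> [[P_nneg [XP P_min]]|->].
- apply: Bregman_eq0 => //; apply/eqP; rewrite eq_le Bregman_ge0 // andbT.
  by have := P_min T T_nneg XT; rewrite pythagoras //; lra.
- by do 2!split=> //; move=> P' P'_nneg XP'; rewrite (pythagoras P') // lerDl Bregman_ge0.
Qed.

Definition trmarg (P : M) : M := Marg (mnode P) (fun e x y => medge P e y x).

Lemma trmargK : involutive trmarg.
Proof. by case. Qed.

Lemma sum_entries2_trmarg f (P Q : M) :
  sum_entries2 f (trmarg P) (trmarg Q) = sum_entries2 f P Q.
Proof.
by rewrite /sum_entries2; congr (_ + _); apply: eq_bigr => e _; apply: exchange_big.
Qed.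

Lemma Bregman_trmarg (P Q : M) : Bregman (trmarg P) (trmarg Q) = Bregman P Q.
Proof. by rewrite /Bregman /Phi /gradPhi_inner !sum_entries2_trmarg. Qed.

Lemma nonneg_marg_trmarg (P : M) : nonneg_marg (trmarg P) <-> nonneg_marg P.
Proof. by split=> -[Pn Pe]; split=> // e x y; apply: Pe. Qed.

Lemma is_bregman_proj_trmarg (X : M -> Prop) (Q P : M) :
  is_bregman_proj (X \o trmarg) Q P <-> is_bregman_proj X (trmarg Q) (trmarg P).
Proof.
split=> -[P_nneg [XP P_min]]; (split; first exact/nonneg_marg_trmarg); split=> //.
- move=> P' P'_nneg XP'; rewrite Bregman_trmarg -[P']trmargK Bregman_trmarg.
  by apply: P_min; rewrite /= ?trmargK //; apply/nonneg_marg_trmarg.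
- move=> P' P'_nneg XP'; rewrite -Bregman_trmarg -[Bregman P' Q]Bregman_trmarg.
  by apply: P_min => //; apply/nonneg_marg_trmarg.
Qed.

Definition supported (v : 'I_n) (e : 'I_m) (a : 'I_d -> R) (b : 'I_d -> 'I_d -> R) : M :=
  Marg (fun i x => if i == v then a x else 0) (fun f x y => if f == e then b x y else 0).

Lemma inner_supported v e a b (P : M) : inner (supported v e a b) P =
  \sum_(x < d) a x * mnode P v x + \sum_(x < d) \sum_(y < d) b x y * medge P e x y.
Proof.
rewrite /inner /sum_entries2 (bigD1 v) // (bigD1 e) //= !eqxx.
rewrite [X in _ + X + _]big1 ?[X in _ + (_ + X)]big1 ?addr0 //.
- by move=> f /negbTE fe; apply: big1 => x _; apply: big1 => y _; rewrite fe mul0r.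
- by move=> i /negbTE iv; apply: big1 => x _; rewrite iv mul0r.
Qed.

End BregmanEntropy.

Lemma sumr_ord_gt0 (R : realDomainType) d (F : 'I_d -> R) :
  (0 < d)%N -> (forall x, 0 < F x) -> 0 < \sum_x F x.
Proof.
move=> d_gt0 F_gt0; rewrite (bigD1 (Ordinal d_gt0)) //=.
by apply: ltr_wpDr => //; apply: sumr_ge0 => x _; apply: ltW.
Qed.

Lemma mul_sqrt_divC (R : rcfType) (a b : R) : 0 < a -> 0 < b ->
  a * Num.sqrt (b / a) = b * Num.sqrt (a / b).
Proof.
suff sqrtE (u v : R) : 0 < u -> 0 < v -> u * Num.sqrt (v / u) = Num.sqrt (u * v).
  by move=> a_gt0 b_gt0; rewrite !sqrtE // mulrC.
move=> u_gt0 v_gt0; rewrite -{1}(ger0_norm (ltW u_gt0)) -sqrtr_sqr -sqrtrM ?sqr_ge0 //.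
by congr Num.sqrt; field; rewrite gt_eqF.
Qed.

Section ProjectionFormulas.
Context {R : realType} {n m d : nat}.
Variables (src : 'I_m -> 'I_n) (G : marg R n m d) (e : 'I_m).
Hypotheses (d_gt0 : (0 < d)%N) (G_pos : pos_marg G).

Lemma bregman_proj_X_to_i (G' : marg R n m d) :
  is_bregman_proj (X_to_i src e) G G' <->
  ((forall f xi xj, medge G' f xi xj =
      if f == e then medge G e xi xj * Num.sqrt (mnode G (src e) xi / rowsum G e xi)
      else medge G f xi xj) /\
   (forall k x, mnode G' k x =
      if k == src e then mnode G k x * Num.sqrt (rowsum G e x / mnode G k x)
      else mnode G k x)).
Proof.
have [Gn Ge] := G_pos.
have r_gt0 x : 0 < rowsum G e x by apply: sumr_ord_gt0.
(* the Lagrange multiplier of the constraint [rowsum P e x = mnode P (src e) x] *)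
pose lam x := ln (Num.sqrt (mnode G (src e) x / rowsum G e x)).
have expR_lam x : expR (lam x) = Num.sqrt (mnode G (src e) x / rowsum G e x).
  by rewrite lnK // posrE sqrtr_gt0 divr_gt0.
have expR_Nlam x : expR (- lam x) = Num.sqrt (rowsum G e x / mnode G (src e) x).
  by rewrite expRN expR_lam -sqrtrV ?invf_div // divr_ge0 // ltW.
pose g := supported (src e) e (fun x => - lam x) (fun x _ => lam x).
have tiltE : tilt G g = Marg
    (fun k x => if k == src e then mnode G k x * Num.sqrt (rowsum G e x / mnode G k x)
                else mnode G k x)
    (fun f xi xj => if f == e
       then medge G e xi xj * Num.sqrt (mnode G (src e) xi / rowsum G e xi)
       else medge G f xi xj).
  apply/marg_eqP; split=> [f x y|k x] /=; case: eqP => [->|_];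
    by rewrite ?expR_lam ?expR_Nlam ?expR0 ?mulr1.
have XT : X_to_i src e (tilt G g).
  move=> x; rewrite tiltE /rowsum /= !eqxx -mulr_suml -/(rowsum G e x).
  exact: mul_sqrt_divC.
have inner0 P : X_to_i src e P -> inner g P = 0.
  move=> XP; rewrite inner_supported -big_split big1 // => x _ /=.
  by rewrite -mulr_sumr -/(rowsum P e x) XP mulNr addNr.
have inner_const P : X_to_i src e P -> inner g P = inner g (tilt G g).
  by move=> XP; rewrite !inner0.
by rewrite (bregman_proj_tilt G_pos XT inner_const) tiltE; apply: marg_eqP.
Qed.

Lemma bregman_proj_X_norm_i (G' : marg R n m d) :
  is_bregman_proj (X_norm_i src e) G G' <->
  ((forall f xi xj, medge G' f xi xj =
      if f == e then medge G e xi xj / edgesum G e else medge G f xi xj) /\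
   (forall k x, mnode G' k x =
      if k == src e then mnode G k x / nodesum G k else mnode G k x)).
Proof.
have [Gn Ge] := G_pos.
have s_gt0 : 0 < nodesum G (src e) by apply: sumr_ord_gt0.
have S_gt0 : 0 < edgesum G e by do 2!apply: sumr_ord_gt0 => // ?.
have expR_Nln (c : R) : 0 < c -> expR (- ln c) = c^-1 by move=> c_gt0; rewrite expRN lnK.
pose g : marg R n m d :=
  supported (src e) e (fun=> - ln (nodesum G (src e))) (fun _ _ => - ln (edgesum G e)).
have tiltE : tilt G g = Marg
    (fun k x => if k == src e then mnode G k x / nodesum G k else mnode G k x)
    (fun f xi xj => if f == e then medge G e xi xj / edgesum G e else medge G f xi xj).
  apply/marg_eqP; split=> [f x y|k x] /=; case: eqP => [->|_];
    by rewrite ?expR_Nln ?expR0 ?mulr1.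
have XT : X_norm_i src e (tilt G g).
  rewrite tiltE; split; rewrite /nodesum /edgesum /= eqxx.
    by rewrite -mulr_suml divff ?gt_eqF.
  by under eq_bigr do rewrite -mulr_suml; rewrite -mulr_suml divff ?gt_eqF.
have innerE P : X_norm_i src e P -> inner g P = - ln (nodesum G (src e)) - ln (edgesum G e).
  move=> [P_node P_edge]; rewrite inner_supported -mulr_sumr.
  under [X in _ + X]eq_bigr do rewrite -mulr_sumr.
  by rewrite -mulr_sumr -/(nodesum P (src e)) -/(edgesum P e) P_node P_edge !mulr1.
have inner_const P : X_norm_i src e P -> inner g P = inner g (tilt G g).
  by move=> XP; rewrite !innerE.
by rewrite (bregman_proj_tilt G_pos XT inner_const) tiltE; apply: marg_eqP.
Qed.

End ProjectionFormulas.

Lemma bregman_proj_X_to_j (R : realType) (n m d : nat) (dst : 'I_m -> 'I_n)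
    (G : marg R n m d) (e : 'I_m) :
  (0 < d)%N -> pos_marg G -> forall G' : marg R n m d,
  is_bregman_proj (X_to_j dst e) G G' <->
  ((forall f xi xj, medge G' f xi xj =
      if f == e then medge G e xi xj * Num.sqrt (mnode G (dst e) xj / colsum G e xj)
      else medge G f xi xj) /\
   (forall k x, mnode G' k x =
      if k == dst e then mnode G k x * Num.sqrt (colsum G e x / mnode G k x)
      else mnode G k x)).
Proof.
move=> d_gt0 [Gn Ge] G'.
have trG_pos : pos_marg (trmarg G) by split=> // f x y; apply: Ge.
apply: iff_trans; first exact: (is_bregman_proj_trmarg (X_to_i dst e)).
rewrite (bregman_proj_X_to_i dst (trmarg G) e d_gt0 trG_pos).
by split=> -[edgeE nodeE]; split=> // f xi xj; apply: edgeE.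
Qed.

Theorem proposition1 (R : realType) (n m d : nat) (src dst : 'I_m -> 'I_n)
  (G : marg R n m d) (e : 'I_m) :
  (0 < d)%N -> pos_marg G ->
  (* (a) *)
  (forall G' : marg R n m d,
     is_bregman_proj (X_to_i src e) G G' <->
     ((forall f xi xj, medge G' f xi xj =
         if f == e then medge G e xi xj
                        * Num.sqrt (mnode G (src e) xi / rowsum G e xi)
         else medge G f xi xj) /\
      (forall k x, mnode G' k x =
         if k == src e then mnode G k x * Num.sqrt (rowsum G e x / mnode G k x)
         else mnode G k x))) /\
  (* (b) *)
  (forall G' : marg R n m d,
     is_bregman_proj (X_norm_i src e) G G' <->
     ((forall f xi xj, medge G' f xi xj =
         if f == e then medge G e xi xj / edgesum G e else medge G f xi xj) /\
      (forall k x, mnode G' k x =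
         if k == src e then mnode G k x / nodesum G k else mnode G k x))) /\
  (* (c) *)
  (forall G' : marg R n m d,
     is_bregman_proj (X_to_j dst e) G G' <->
     ((forall f xi xj, medge G' f xi xj =
         if f == e then medge G e xi xj
                        * Num.sqrt (mnode G (dst e) xj / colsum G e xj)
         else medge G f xi xj) /\
      (forall k x, mnode G' k x =
         if k == dst e then mnode G k x * Num.sqrt (colsum G e x / mnode G k x)
         else mnode G k x))) /\
  (* (d) *)
  (forall G' : marg R n m d,
     is_bregman_proj (X_norm_j dst e) G G' <->
     ((forall f xi xj, medge G' f xi xj =
         if f == e then medge G e xi xj / edgesum G e else medge G f xi xj) /\
      (forall k x, mnode G' k x =
         if k == dst e then mnode G k x / nodesum G k else mnode G k x))).
Proof.
move=> d_gt0 G_pos; split; [|split; [|split]].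
- exact: bregman_proj_X_to_i.
- exact: bregman_proj_X_norm_i.
- exact: bregman_proj_X_to_j.
- exact: (bregman_proj_X_norm_i dst).
Qed.
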